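(* For every nonnegative integer $n$ with $v(n)=0$, the directed graph $A(n)$ is a directed path graph.
   Context: A hyperbinary expansion of a nonnegative integer $n$ is a word $x_0\cdots x_k$ over $\{0,1,2\}$ with $x_0\ne0$ and $\sum_i x_i2^{k-i}=n$. The empty word is the unique hyperbinary expansion of $0$. Write $\mathcal H(n)$ for the set of such expansions and $b(n)=|\mathcal H(n)|$. $A(n)$ is the directed graph on $\mathcal H(n)$ with an arc from $\mathbf x02\mathbf y$ to $\mathbf x10\mathbf y$, from $2\mathbf y$ to $10\mathbf y$, and from $\mathbf x12\mathbf y$ to $\mathbf x20\mathbf y$, for arbitrary words $\mathbf x,\mathbf y$ whenever both endpoints lie in $\mathcal H(n)$. $A(n)$ is connected. $v(n)$ denotes the cyclomatic number of $A(n)$: (number of arcs) $-\,b(n)+1$. A directed path graph is a graph whose vertices can be listed $u_0,\dots,u_k$ so that its arcs are exactly $(u_{i-1},u_i)$ for $1\le i\le k$. *)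

From mathcomp Require Import all_boot all_algebra.
Set Implicit Arguments. Unset Strict Implicit. Unset Printing Implicit Defensive.

(* Words are sequences of naturals; x_0 is the head. *)

Definition wval (w : seq nat) : nat := foldl (fun acc d => 2 * acc + d) 0 w.

Definition hyp (n : nat) (w : seq nat) : bool :=
  [&& all (fun d => d <= 2) w, (w == [::]) || (head 0 w != 0) & wval w == n].

Fixpoint words (k : nat) : seq (seq nat) :=
  if k is k'.+1 then [::] :: [seq d :: w | d <- [:: 0; 1; 2], w <- words k']
  else [:: [::]].

(* H(n): every hyperbinary expansion of n has length <= n
   (x_0 >= 1 forces 2^k <= n), so this lists all of H(n). *)
Definition Hset (n : nat) : seq (seq nat) := [seq w <- words n | hyp n w].

Definition b (n : nat) : nat := size (Hset n).

(* u = x ++ a ++ y and w = x ++ c ++ y for some words x, y *)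
Definition rewr (a c : seq nat) (u w : seq nat) : bool :=
  has (fun i => (u == take i u ++ a ++ drop (i + size a) u) &&
                (w == take i u ++ c ++ drop (i + size a) u))
      (iota 0 (size u).+1).

(* arcs  x02y -> x10y,  2y -> 10y,  x12y -> x20y *)
Definition arc (u w : seq nat) : bool :=
  [|| rewr [:: 0; 2] [:: 1; 0] u w,
      (u == 2 :: behead u) && (w == [:: 1; 0] ++ behead u)
    | rewr [:: 1; 2] [:: 2; 0] u w].

Definition narcs (n : nat) : nat :=
  count (fun p => arc p.1 p.2) [seq (u, w) | u <- Hset n, w <- Hset n].

Definition v (n : nat) : int := (narcs n)%:Z - (b n)%:Z + 1.

Definition is_directed_path_graph (n : nat) : Prop :=
  exists s : seq (seq nat),
    [/\ uniq s,
        (forall w, (w \in s) = hyp n w) &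
        (forall u w, hyp n u -> hyp n w ->
           (arc u w <-> exists i, [/\ i.+1 < size s,
                                     nth [::] s i = u & nth [::] s i.+1 = w]))].

(* An expansion containing a 2 has an out-arc (rewrite its leftmost 2) and
   one containing a 0 has an in-arc (rewrite its leftmost 0), while at most one
   expansion avoids the digit 2 (the binary one) and at most one avoids 0.
   When v(n) = 0 there are b(n) - 1 arcs, so summing out-degrees (resp.
   in-degrees) over the vertices forces every out- and in-degree to be at most
   1, and the sink of A(n) is unique.  Arcs increase the base-3 reading of a
   word, so A(n) is acyclic, and an acyclic graph with these properties is a
   directed path: remove its sink and induct. *)

From Pilot Require Import Defs.
From mathcomp Require Import all_boot all_algebra zify.
Set Implicit Arguments. Unset Strict Implicit.

Lemma count_sum (I : Type) (p : pred I) (s : seq I) : count p s = \sum_(x <- s) p x.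
Proof. by rewrite -sum1_count big_mkcond; apply: eq_bigr => x _; case: (p x). Qed.

Lemma count_allpairsl (S U : Type) (r : S -> U -> bool) s t :
  count (fun p => r p.1 p.2) [seq (x, y) | x <- s, y <- t] =
  \sum_(x <- s) count (r x) t.
Proof. by rewrite count_sum big_allpairs; apply: eq_bigr => x _; rewrite count_sum. Qed.

Lemma count_allpairsr (S U : Type) (r : S -> U -> bool) s t :
  count (fun p => r p.1 p.2) [seq (x, y) | x <- s, y <- t] =
  \sum_(y <- t) count (r^~ y) s.
Proof.
rewrite count_sum big_allpairs exchange_big.
by apply: eq_bigr => y _; rewrite count_sum.
Qed.

Section SeqCounting.
Variable T : eqType.

Lemma count_le1_eq (p : pred T) s x y :
  count p s <= 1 -> x \in s -> y \in s -> p x -> p y -> x = y.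
Proof.
move=> c1 xs ys px py.
have: x \in filter p s by rewrite mem_filter px.
have: y \in filter p s by rewrite mem_filter py.
by move: c1; rewrite -size_filter; case: (filter p s) => [|z [|]] //= _;
  rewrite !inE => /eqP-> /eqP->.
Qed.

Lemma count_le1_uniq (p : pred T) s :
  uniq s -> {in s &, forall x y, p x -> p y -> x = y} -> count p s <= 1.
Proof.
move=> us p_inj; rewrite -size_filter.
case ps: (filter p s) => [|x t] //.
have: x \in filter p s by rewrite ps mem_head.
rewrite mem_filter -ps => /andP[px xs].
apply: (@uniq_leq_size _ _ [:: x]); first exact: filter_uniq.
by move=> y; rewrite mem_filter inE => /andP[py ys]; apply/eqP/p_inj.
Qed.

Lemma le1_of_sum_eq_pred_size (f : T -> nat) s :
  uniq s -> \sum_(x <- s) f x + 1 = size s ->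
  {in s &, forall x y, f x = 0 -> f y = 0 -> x = y} -> {in s, forall x, f x <= 1}.
Proof.
move=> us sum_f f0_inj x xs.
have zeros : count (fun y => f y == 0) s <= 1.
  by apply: count_le1_uniq => // y z ys zs /eqP fy /eqP fz; apply: f0_inj.
have rem_bound : size (rem x s) <= \sum_(y <- rem x s) (f y + (f y == 0)).
  by rewrite -sum1_size; apply: leq_sum => y _; case: (f y).
have split_x : \sum_(y <- s) (f y + (f y == 0)) =
                f x + (f x == 0) + \sum_(y <- rem x s) (f y + (f y == 0)).
  exact: big_rem.
move: rem_bound zeros sum_f split_x.
rewrite size_rem // count_sum !big_split /=.
have : 0 < size s by case: (s) xs.
lia.
Qed.

Lemma seq_argmax (F : T -> nat) s :
  s != [::] -> exists2 m, m \in s & {in s, forall x, F x <= F m}.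
Proof.
elim: s => // y s IH _.
have [->|/IH[m ms m_max]] := eqVneq s [::].
  by exists y => [|x]; rewrite ?mem_head // inE => /eqP->.
have [le_ym|lt_my] := leqP (F y) (F m).
  by exists m => [|x]; rewrite inE ?ms ?orbT // => /predU1P[->|/m_max].
exists y => [|x]; first exact: mem_head.
by rewrite inE => /predU1P[->//|/m_max]; lia.
Qed.

End SeqCounting.

Section PathOrder.
Variables (T : eqType) (e : rel T).

Definition adj_pairs (s : seq T) := zip s (behead s).

Lemma mem_adj_pairs_nth d s u w : (u, w) \in adj_pairs s <->
  exists i, [/\ i.+1 < size s, nth d s i = u & nth d s i.+1 = w].
Proof.
rewrite /adj_pairs; split.
- case/(nthP (d, d)) => i; rewrite size_zip size_behead => hi.
  rewrite nth_zip_cond size_zip size_behead hi nth_behead => -[<- <-].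
  by exists i; split => //; lia.
- case=> i [hi <- <-]; apply/(nthP (d, d)); exists i;
    rewrite ?nth_zip_cond size_zip size_behead ?nth_behead ?ifT //; lia.
Qed.

Lemma mem_adj_pairs s u w : (u, w) \in adj_pairs s -> (u \in s) && (w \in s).
Proof.
case/(mem_adj_pairs_nth u) => i [hi <- <-].
by rewrite !mem_nth // ltnW.
Qed.

Lemma adj_pairs_rcons x s y :
  adj_pairs (rcons (x :: s) y) = rcons (adj_pairs (x :: s)) (last x s, y).
Proof. by elim: s x => //= z s IH x; rewrite -IH. Qed.

Lemma adj_pairs_last x s w : uniq (x :: s) -> (last x s, w) \notin adj_pairs (x :: s).
Proof.
elim: s x => //= z s IH x /andP[xzs uzs].
rewrite in_cons negb_or IH // andbT xpair_eqE negb_and.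
by apply/orP; left; apply: contraNneq xzs => <-; apply: mem_last.
Qed.

Definition path_order_of (V s : seq T) :=
  [/\ uniq s, s =i V & {in V &, forall u w, e u w = ((u, w) \in adj_pairs s)}].

Lemma sink_of_rem_sink V t x : uniq V ->
  {in V &, forall t1 t2, ~~ has (e t1) V -> ~~ has (e t2) V -> t1 = t2} ->
  t \in V -> ~~ has (e t) V -> x \in rem t V -> ~~ has (e x) (rem t V) -> e x t.
Proof.
move=> uV sink1 tV t_sink xV' x_sink'; have xV := mem_rem xV'.
have /hasP[w wV exw] : has (e x) V.
  apply: contraT => x_sink.
  by rewrite (sink1 x t) ?mem_rem_uniqF in xV'.
have [<-//|wt] := eqVneq w t.
by case/hasP: x_sink'; exists w; rewrite // mem_rem_uniq // inE wt.
Qed.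

Lemma path_order_rcons V t s : uniq V ->
  {in V & &, forall u1 u2 w, e u1 w -> e u2 w -> u1 = u2} ->
  t \in V -> ~~ has (e t) V ->
  (forall x, x \in rem t V -> ~~ has (e x) (rem t V) -> e x t) ->
  path_order_of (rem t V) s -> path_order_of V (rcons s t).
Proof.
move=> uV in1 tV t_sink to_t [us sV' e_s].
have memV' y : (y \in rem t V) = (y != t) && (y \in V) by rewrite mem_rem_uniq.
have ts : t \notin s by rewrite sV' memV' eqxx.
have memV y : (y \in V) = (y == t) || (y \in s).
  by rewrite sV' memV'; case: eqVneq => [->|].
case: s us sV' e_s ts memV => [|x s] us sV' e_s ts memV.
  split=> [//|y|u w]; first by rewrite memV in_nil orbF inE.
  rewrite !memV !in_nil !orbF => /eqP-> /eqP->.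
  exact/negbTE/(hasPn t_sink).
have last_to_t : e (last x s) t.
  have lastV' : last x s \in rem t V by rewrite -sV' mem_last.
  apply: to_t => //; apply/hasPn => w; rewrite -sV' => ws.
  by rewrite e_s -?sV' ?mem_last //; apply: adj_pairs_last.
split=> [|y|u w hu hw]; first by rewrite rcons_uniq ts us.
  by rewrite mem_rcons in_cons memV.
rewrite adj_pairs_rcons mem_rcons in_cons xpair_eqE.
have notin_pairs y z : (y \notin x :: s) || (z \notin x :: s) ->
    (y, z) \notin adj_pairs (x :: s).
  by apply: contraL => /mem_adj_pairs/andP[-> ->].
have [->|wt] := eqVneq w t.
  rewrite andbT (negbTE (notin_pairs u t _)) ?ts ?orbT // orbF.
  apply/idP/eqP => [eut|->//].
  by apply: (in1 u (last x s) t) => //; rewrite memV mem_last orbT.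
rewrite andbF /=; have [->|ut] := eqVneq u t.
  by rewrite (negbTE (hasPn t_sink w hw)) (negbTE (notin_pairs t w _)) ?ts.
by apply: e_s; rewrite memV' ?ut ?wt.
Qed.

Variable P : T -> nat.
Hypothesis e_mono : forall u w, e u w -> P u < P w.

Lemma exists_sink V : V != [::] -> exists2 t, t \in V & ~~ has (e t) V.
Proof.
case/(seq_argmax P) => t tV t_max; exists t => //.
by apply/hasPn => w /t_max; apply: contraTN => /e_mono; rewrite -ltnNge.
Qed.

Lemma path_order V : uniq V ->
  {in V & &, forall u w1 w2, e u w1 -> e u w2 -> w1 = w2} ->
  {in V & &, forall u1 u2 w, e u1 w -> e u2 w -> u1 = u2} ->
  {in V &, forall t1 t2, ~~ has (e t1) V -> ~~ has (e t2) V -> t1 = t2} ->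
  exists s, path_order_of V s.
Proof.
move sizeV: (size V) => k; elim: k V sizeV => [|k IH] V.
  by move/size0nil->; exists [::].
move=> sizeV uV out1 in1 sink1.
have [t tV t_sink] : exists2 t, t \in V & ~~ has (e t) V.
  by apply: exists_sink; rewrite -size_eq0 sizeV.
have remV : {subset rem t V <= V} := @mem_rem _ t V.
have to_t := sink_of_rem_sink uV sink1 tV t_sink.
have [s s_order] : exists s, path_order_of (rem t V) s.
  apply: IH; first by rewrite size_rem // sizeV.
  - exact: rem_uniq.
  - by move=> u w1 w2 /remV hu /remV h1 /remV h2; apply: out1.
  - by move=> u1 u2 w /remV h1 /remV h2 /remV hw; apply: in1.
  - move=> t1 t2 h1 h2 s1 s2.
    exact: in1 (remV _ h1) (remV _ h2) tV (to_t _ h1 s1) (to_t _ h2 s2).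
by exists (rcons s t); apply: path_order_rcons.
Qed.
End PathOrder.

Definition push_digit (B acc d : nat) := B * acc + d.

Lemma wvalE w : wval w = foldl (push_digit 2) 0 w.
Proof. by []. Qed.

Lemma foldl_push_digit_ge B a t : a * B ^ size t <= foldl (push_digit B) a t.
Proof.
elim: t a => [|d t IH] a /=; first by rewrite muln1.
by have := IH (push_digit B a d); rewrite /push_digit expnS; nia.
Qed.

Lemma foldl_push_digit_mono B t a1 a2 :
  0 < B -> a1 < a2 -> foldl (push_digit B) a1 t < foldl (push_digit B) a2 t.
Proof.
move=> B_gt0; elim: t a1 a2 => //= d t IH a1 a2 lt_a.
by apply: IH; rewrite /push_digit; nia.
Qed.

Lemma hyp_digit n w d : hyp n w -> d \in w -> d <= 2.
Proof. by case/and3P => /allP dig _ _ /dig. Qed.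

Lemma hyp_gt0 n w : hyp n w -> 0 < size w -> 0 < n.
Proof.
case/and3P => _; case: w => // d t /= d_gt0 /eqP <- _.
have := foldl_push_digit_ge 2 (push_digit 2 0 d) t.
have : 0 < 2 ^ size t by rewrite expn_gt0.
by rewrite wvalE /= /push_digit; nia.
Qed.

Lemma size_hyp n w : hyp n w -> size w <= n.
Proof.
case/and3P => _; case: w => // d t /= d_gt0 /eqP <-.
have := foldl_push_digit_ge 2 (push_digit 2 0 d) t.
have := ltn_expl (size t) (isT : 1 < 2).
by rewrite wvalE /= /push_digit; nia.
Qed.

Lemma wordsS k : words k.+1 = [::] :: [seq d :: w | d <- [:: 0; 1; 2], w <- words k].
Proof. by []. Qed.

Lemma mem_words k w : (w \in words k) = all (fun d => d <= 2) w && (size w <= k).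
Proof.
elim: k w => [|k IH] [|d t] //; first by rewrite andbF.
rewrite wordsS in_cons [d :: t == _]/= [all _ _]/= -andbA -IH.
apply/allpairsP/andP => [[[c u] [/= c012 ut [-> ->]]] | [d_le t_ok]].
  by move: c012; rewrite !inE => /or3P[] /eqP->.
by exists (d, t); split=> //=; move: d_le; case: d => [|[|[|]]].
Qed.

Lemma words_uniq k : uniq (words k).
Proof.
elim: k => // k IH; rewrite wordsS cons_uniq allpairs_uniq ?andbT //.
  by apply/allpairsP => -[[? ?] []].
by move=> [? ?] [? ?] _ _ [-> ->].
Qed.

Lemma mem_Hset n w : (w \in Hset n) = hyp n w.
Proof.
rewrite mem_filter mem_words andbC; apply/andP/idP => [[]//|hw]; split=> //.
by rewrite size_hyp // andbT; case/and3P: hw.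
Qed.

Lemma Hset_uniq n : uniq (Hset n).
Proof. exact/filter_uniq/words_uniq. Qed.

Lemma rewrP a c u w :
  reflect (exists x y, u = x ++ a ++ y /\ w = x ++ c ++ y) (rewr a c u w).
Proof.
apply: (iffP hasP) => [[i _ /andP[/eqP u_eq /eqP w_eq]] | [x [y [-> ->]]]].
  by exists (take i u), (drop (i + size a) u).
exists (size x); first by rewrite mem_iota size_cat; lia.
by rewrite take_size_cat // catA drop_size_cat ?size_cat // -catA !eqxx.
Qed.

Definition tval (w : seq nat) := foldl (push_digit 3) 0 w.

Lemma tval_cat x p y :
  tval (x ++ p ++ y) = foldl (push_digit 3) (foldl (push_digit 3) (tval x) p) y.
Proof. by rewrite /tval !foldl_cat. Qed.

Lemma tval_arc u w : Defs.arc u w -> tval u < tval w.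
Proof.
case/or3P => [/rewrP | /andP[/eqP-> /eqP->] | /rewrP].
- case=> x [y [-> ->]]; rewrite !tval_cat; apply: foldl_push_digit_mono => //.
  by rewrite /= /push_digit; lia.
- by rewrite /tval /=; apply: foldl_push_digit_mono.
- case=> x [y [-> ->]]; rewrite !tval_cat; apply: foldl_push_digit_mono => //.
  by rewrite /= /push_digit; lia.
Qed.

Lemma wval_cat x p y :
  wval (x ++ p ++ y) = foldl (push_digit 2) (foldl (push_digit 2) (wval x) p) y.
Proof. by rewrite wvalE !foldl_cat. Qed.

Lemma hyp_rewr n x p q y :
  hyp n (x ++ p ++ y) -> all (fun d => d <= 2) q -> (x != [::]) || (head 0 q != 0) ->
  foldl (push_digit 2) (wval x) p = foldl (push_digit 2) (wval x) q ->
  hyp n (x ++ q ++ y).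
Proof.
case/and3P => dig lead /eqP val_n q_dig q_lead same_val; apply/and3P; split.
- by move: dig; rewrite !all_cat q_dig => /and3P[-> _ ->].
- by move: lead q_lead; case: x {dig val_n same_val} => //= _; case: q {q_dig}.
- by rewrite wval_cat -same_val -wval_cat val_n.
Qed.

Lemma split_first (T : eqType) (s : seq T) a :
  a \in s -> exists x y, s = rcons x a ++ y /\ a \notin x.
Proof.
rewrite -has_pred1; case/split_find => b x y /eqP-> no_a.
by exists x, y; rewrite -has_pred1.
Qed.

Lemma out_arc n u : hyp n u -> 2 \in u -> has (Defs.arc u) (Hset n).
Proof.
move=> hu /split_first[x [y [u_eq no2]]]; rewrite {}u_eq in hu *.
case/lastP: x no2 hu => [|x c] no2 hu.
  apply/hasP; exists [:: 1, 0 & y]; last by apply/or3P/Or32; rewrite /= !eqxx.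
  by rewrite mem_Hset; apply: (@hyp_rewr n [::] [:: 2] [:: 1; 0] y).
rewrite -!cats1 -!catA /= in hu no2 *.
have c_le2 : c <= 2 by apply: (hyp_digit hu); rewrite mem_cat mem_head orbT.
case: c c_le2 no2 hu => [|[|[|//]]] _ no2 hu;
  last by rewrite mem_cat mem_head orbT in no2.
  apply/hasP; exists (x ++ [:: 1; 0] ++ y); last by apply/or3P/Or31/rewrP; exists x, y.
  by rewrite mem_Hset; apply: (hyp_rewr (p := [:: 0; 2])) => //=;
    rewrite ?orbT /push_digit; lia.
apply/hasP; exists (x ++ [:: 2; 0] ++ y); last by apply/or3P/Or33/rewrP; exists x, y.
by rewrite mem_Hset; apply: (hyp_rewr (p := [:: 1; 2])) => //=;
  rewrite ?orbT /push_digit; lia.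
Qed.

Lemma in_arc n w : hyp n w -> 0 \in w -> has (Defs.arc^~ w) (Hset n).
Proof.
move=> hw /split_first[x [y [w_eq no0]]]; rewrite {}w_eq in hw *.
case/lastP: x no0 hw => [|x c] no0 hw; first by case/and3P: hw.
rewrite -!cats1 -!catA /= in hw no0 *.
have c_le2 : c <= 2 by apply: (hyp_digit hw); rewrite mem_cat mem_head orbT.
case: c c_le2 no0 hw => [|[|[|//]]] _ no0 hw;
  first by rewrite mem_cat mem_head orbT in no0.
  have [x_nil | x_nil] := eqVneq x [::].
    rewrite {}x_nil in hw *; apply/hasP; exists (2 :: y).
      by rewrite mem_Hset; apply: (@hyp_rewr n [::] [:: 1; 0] [:: 2] y).
    by apply/or3P/Or32; rewrite /= !eqxx.
  apply/hasP; exists (x ++ [:: 0; 2] ++ y); last by apply/or3P/Or31/rewrP; exists x, y.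
  by rewrite mem_Hset; apply: (hyp_rewr (p := [:: 1; 0])) => //=;
    rewrite ?x_nil /push_digit; lia.
apply/hasP; exists (x ++ [:: 1; 2] ++ y); last by apply/or3P/Or33/rewrP; exists x, y.
by rewrite mem_Hset; apply: (hyp_rewr (p := [:: 2; 0])) => //=;
  rewrite ?orbT /push_digit; lia.
Qed.

Lemma hyp_rcons n t d : hyp n (rcons t d) -> hyp (wval t) t /\ n = 2 * wval t + d.
Proof.
case/and3P; rewrite all_rcons => /andP[_ dig] lead /eqP <-.
by split; [apply/and3P; split => //; case: t lead {dig} | rewrite wvalE foldl_rcons].
Qed.

Lemma hyp_uniq_digits lo n x y : hyp n x -> hyp n y ->
  all (fun d => lo <= d <= lo.+1) x -> all (fun d => lo <= d <= lo.+1) y -> x = y.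
Proof.
elim/last_ind: x n y => [|t d IH] n y; case/lastP: y => [|t' d'] //.
- by case/and3P=> _ _ /eqP <- /hyp_gt0; rewrite size_rcons => /(_ isT).
- by move=> /hyp_gt0 + /and3P[_ _ /eqP n0]; rewrite size_rcons -n0 => /(_ isT).
move=> /hyp_rcons[ht ->] /hyp_rcons[ht' val_eq].
rewrite !all_rcons => /andP[d_lo t_lo] /andP[d'_lo t'_lo].
have same_d : d = d' by lia.
have same_t : wval t' = wval t by lia.
by rewrite same_d (IH _ t' ht) // -same_t.
Qed.

Lemma hyp_no2_digits n w : hyp n w -> 2 \notin w -> all (fun d => 0 <= d <= 1) w.
Proof.
move=> hw no2; apply/allP => d d_in; move: d_in (hyp_digit hw d_in).
by case: d => [|[|[|]]] // d_in _; rewrite d_in in no2.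
Qed.

Lemma hyp_no0_digits n w : hyp n w -> 0 \notin w -> all (fun d => 1 <= d <= 2) w.
Proof.
move=> hw no0; apply/allP => d d_in; move: d_in (hyp_digit hw d_in).
by case: d => [|[|[|]]] // d_in _; rewrite d_in in no0.
Qed.

Lemma hyp_no2_uniq n x y : hyp n x -> hyp n y -> 2 \notin x -> 2 \notin y -> x = y.
Proof.
move=> hx hy /(hyp_no2_digits hx) x01 /(hyp_no2_digits hy) y01.
exact: hyp_uniq_digits hx hy x01 y01.
Qed.

Lemma hyp_no0_uniq n x y : hyp n x -> hyp n y -> 0 \notin x -> 0 \notin y -> x = y.
Proof.
move=> hx hy /(hyp_no0_digits hx) x12 /(hyp_no0_digits hy) y12.
exact: hyp_uniq_digits hx hy x12 y12.
Qed.

Lemma narcs_out n : narcs n = \sum_(u <- Hset n) count (Defs.arc u) (Hset n).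
Proof. exact: count_allpairsl. Qed.

Lemma narcs_in n : narcs n = \sum_(w <- Hset n) count (Defs.arc^~ w) (Hset n).
Proof. exact: count_allpairsr. Qed.

Lemma Hset_sink_uniq n : {in Hset n &, forall u1 u2,
  ~~ has (Defs.arc u1) (Hset n) -> ~~ has (Defs.arc u2) (Hset n) -> u1 = u2}.
Proof.
move=> u1 u2; rewrite !mem_Hset => h1 h2 sink1 sink2.
by apply: (hyp_no2_uniq h1 h2); [apply: contra sink1 | apply: contra sink2];
  apply: out_arc.
Qed.

Lemma Hset_source_uniq n : {in Hset n &, forall w1 w2,
  ~~ has (Defs.arc^~ w1) (Hset n) -> ~~ has (Defs.arc^~ w2) (Hset n) -> w1 = w2}.
Proof.
move=> w1 w2; rewrite !mem_Hset => h1 h2 src1 src2.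
by apply: (hyp_no0_uniq h1 h2); [apply: contra src1 | apply: contra src2];
  apply: in_arc.
Qed.

Lemma arc_out_functional n : narcs n + 1 = b n ->
  {in Hset n & &, forall u w1 w2, Defs.arc u w1 -> Defs.arc u w2 -> w1 = w2}.
Proof.
move=> tree u w1 w2 hu h1 h2; apply: count_le1_eq h1 h2.
pose outdeg x := count (Defs.arc x) (Hset n).
apply: (le1_of_sum_eq_pred_size (f := outdeg) (Hset_uniq n) _ _ hu).
  by rewrite -narcs_out.
move=> x y hx hy cx cy; apply: (@Hset_sink_uniq n) => //.
  by rewrite has_count -/(outdeg x) cx.
by rewrite has_count -/(outdeg y) cy.
Qed.

Lemma arc_in_functional n : narcs n + 1 = b n ->
  {in Hset n & &, forall u1 u2 w, Defs.arc u1 w -> Defs.arc u2 w -> u1 = u2}.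
Proof.
move=> tree u1 u2 w h1 h2 hw; apply: (count_le1_eq (p := Defs.arc^~ w)) h1 h2.
pose indeg x := count (Defs.arc^~ x) (Hset n).
apply: (le1_of_sum_eq_pred_size (f := indeg) (Hset_uniq n) _ _ hw).
  by rewrite -narcs_in.
move=> x y hx hy cx cy; apply: (@Hset_source_uniq n) => //.
  by rewrite has_count -/(indeg x) cx.
by rewrite has_count -/(indeg y) cy.
Qed.

Theorem mainTheorem6 (n : nat) : v n = 0%R -> is_directed_path_graph n.
Proof.
move=> v0; have tree : narcs n + 1 = b n by move: v0; rewrite /v; lia.
have [s [s_uniq s_eq arc_eq]] := path_order tval_arc (Hset_uniq n)
  (arc_out_functional tree) (arc_in_functional tree) (@Hset_sink_uniq n).
exists s; split=> // [w | u w hu hw]; first by rewrite s_eq mem_Hset.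
by rewrite arc_eq ?mem_Hset //; apply: mem_adj_pairs_nth.
Qed.
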